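(* Assume there exists $\Delta_{\min}^{\mathcal P}>0$ such that for every truth $p\in\mathcal P$, $a_p(X)$ is unique and $R_p(X,a_p(X))-\sup_{a\in S_X,\,a\neq a_p(X)}R_p(X,a)\ge\Delta_{\min}^{\mathcal P}$ holds $d_0$-a.s. Then for every $p,q\in\mathcal P$, \[ \Delta_{\min}^{\mathcal P}\,d_0\{a_q\neq a_p\}\le\mathcal G_p(R_q)\le\Delta_{\max}^{\mathcal P}\,d_0\{a_q\neq a_p\}. \]
   Context: $\mathcal X$ is a context space with distribution $d_0$; $\mathcal A$ is a separable metric action space; $\pi_0$ is a reference policy and $S_x:=\mathrm{supp}(\pi_0(\cdot\mid x))$. $\mathcal P$ is a compact class of truths, each $p\in\mathcal P$ inducing a $\pi_0$-centered measurable reward $R_p:\mathcal X\times\mathcal A\to\mathbb R$. For a reward $R$, $a_R(x)$ is a measurable selector in $\arg\max_{a\in S_x}R(x,a)$ (fixed measurable tie-breaking), and $a_p:=a_{R_p}$. The temperature-zero regret is $\mathcal G_p(R):=\mathbb E_{X\sim d_0}[R_p(X,a_p(X))-R_p(X,a_R(X))]$. Also $\Delta_{\max}^{\mathcal P}:=\sup_{p\in\mathcal P}\sup_{x\in\mathcal X}\sup_{a\in S_x}(R_p(x,a_p(x))-R_p(x,a))$. *)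

From HB Require Import structures.
From mathcomp Require Import all_boot all_order all_algebra.
From mathcomp Require Import all_classical all_reals all_analysis.
Set Implicit Arguments. Unset Strict Implicit. Unset Printing Implicit Defensive.
Import Order.TTheory GRing.Theory Num.Theory.
Local Open Scope classical_set_scope.
Local Open Scope ring_scope.
Local Open Scope ereal_scope.

Definition regret {dX : measure_display} {X : measurableType dX} {A : Type}
  {R : realType} (d0 : probability X R) (Rp : X -> A -> R) (ap aR : X -> A)
  : \bar R :=
  \int[d0]_x ((Rp x (ap x) - Rp x (aR x))%R)%:E.

Definition Delta_max {PT : Type} {X A : Type} {R : realType}
  (P : set PT) (S : X -> set A) (Rw : PT -> X -> A -> R) (asel : PT -> X -> A)
  : \bar R :=
  ereal_sup [set r : \bar R | exists p x a, [/\ P p, S x a &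
      r = ((Rw p x (asel p x) - Rw p x a)%R)%:E] ].

Definition gap_at {X A : Type} {R : realType} (S : X -> set A)
  (Rp : X -> A -> R) (ap : X -> A) (Dmin : R) (x : X) : Prop :=
  (forall a, S x a -> Rp x a = Rp x (ap x) -> a = ap x) /\
  (Dmin%:E <= (Rp x (ap x))%:E
              - ereal_sup [set (Rp x a)%:E | a in S x `\ ap x]).

Definition is_argmax_selector {X A : Type} {R : realType} (S : X -> set A)
  (Rp : X -> A -> R) (a : X -> A) : Prop :=
  forall x, S x (a x) /\ (forall b, S x b -> (Rp x b <= Rp x (a x))%R).

From HB Require Import structures.
From mathcomp Require Import all_boot all_order all_algebra.
From mathcomp Require Import all_classical all_reals all_analysis.
From mathcomp Require Import measurable_realfun lra.
Import Order.TTheory GRing.Theory Num.Theory.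
Local Open Scope classical_set_scope.
Local Open Scope ring_scope.
Local Open Scope ereal_scope.

(* The regret integrand R_p(x, a_p x) - R_p(x, a_q x) vanishes off the
   disagreement set {a_q <> a_p}.  On that set a_q x is a competitor in
   S_x \ {a_p x}, so the a.s. gap condition bounds the integrand below by
   Delta_min, while by definition it is bounded above by Delta_max.
   Integrating these pointwise bounds against d0 gives both inequalities. *)

Section integral_bounds.
Context {d : measure_display} {T : measurableType d} {R : realType}.
Variable mu : {measure set T -> \bar R}.
Context {E : set T} {f : T -> \bar R}.
Hypotheses (mE : measurable E) (mf : measurable_fun setT f)
  (f_ge0 : forall x, 0 <= f x).

Lemma mul_measure_le_integral (c : R) : (0 <= c)%R ->
  {ae mu, forall x, E x -> c%:E <= f x} -> c%:E * mu E <= \int[mu]_x f x.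
Proof.
move=> c_ge0 cf; rewrite -integral_cst // integral_mkcond.
apply: ae_ge0_le_integral => //.
- by move=> x _; rewrite patchE; case: ifP; rewrite ?lee_fin.
- by apply/(measurable_restrictT _ mE); exact: measurable_cst.
- apply: filterS cf => x cfx _; rewrite patchE.
  by case: ifPn => [/set_mem/cfx|_].
Qed.

Lemma integral_le_mul_measure (c : \bar R) : 0 <= c ->
  (forall x, E x -> f x <= c) -> (forall x, ~ E x -> f x = 0) ->
  \int[mu]_x f x <= c * mu E.
Proof.
move=> c_ge0 fc f0; rewrite -integral_cst // (integral_mkcond E).
apply: ge0_le_integral => //.
- by apply/(measurable_restrictT _ mE); exact: measurable_cst.
- move=> x _; rewrite patchE; case: ifPn => [/set_mem/fc //|/negP Ex].
  by rewrite f0 // => /mem_set.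
Qed.

End integral_bounds.

Lemma measurable_neq {d dA : measure_display} {T : measurableType d}
    {A : measurableType dA} {f g : T -> A} :
  measurable [set aa : A * A | aa.1 = aa.2] ->
  measurable_fun setT f -> measurable_fun setT g ->
  measurable [set x | f x <> g x].
Proof.
move=> mdiag mf mg.
have -> : [set x | f x <> g x] =
    (fun x => (f x, g x)) @^-1` (~` [set aa : A * A | aa.1 = aa.2]) by [].
rewrite -[_ @^-1` _]setTI.
exact: (measurable_fun_pair mf mg) (measurableC mdiag).
Qed.

Lemma measurableT_comp_graph {d dA : measure_display} {T : measurableType d}
    {A : measurableType dA} {R : realType} {F : T -> A -> R} {a : T -> A} :
  measurable_fun setT (fun xa => F xa.1 xa.2) -> measurable_fun setT a ->
  measurable_fun setT (fun x => F x (a x)).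
Proof.
move=> mF ma.
apply: (measurableT_comp (f := fun xa : T * A => F xa.1 xa.2)
  (g := fun x => (x, a x))) => //.
exact: measurable_fun_pair.
Qed.

Lemma gap_at_le_subr {X A : Type} {R : realType} {S : X -> set A}
    {Rp : X -> A -> R} {ap : X -> A} {Dmin : R} {x : X} {b : A} :
  gap_at S Rp ap Dmin x -> S x b -> b <> ap x ->
  (Dmin <= Rp x (ap x) - Rp x b)%R.
Proof.
move=> [_ gap] Sb b_neq.
have le_sup : (Rp x b)%:E <= ereal_sup [set (Rp x a)%:E | a in S x `\ ap x].
  by apply: ereal_sup_ubound; exists b.
move: gap le_sup; case: ereal_sup => [s| |] /=.
- by rewrite -EFinD !lee_fin => ? ?; lra.
- by rewrite addeNy leeNy_eq.
- by rewrite leeNy_eq.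
Qed.

Section Delta_max.
Context {PT X A : Type} {R : realType}.
Context {P : set PT} {S : X -> set A} {Rw : PT -> X -> A -> R}
  {asel : PT -> X -> A}.

Lemma Delta_max_ubound {p : PT} {x : X} {a : A} : P p -> S x a ->
  (Rw p x (asel p x) - Rw p x a)%:E <= Delta_max P S Rw asel.
Proof. by move=> Pp Sa; apply: ereal_sup_ubound; exists p, x, a. Qed.

Lemma Delta_max_ge0 {p : PT} {x : X} :
  P p -> S x (asel p x) -> 0 <= Delta_max P S Rw asel.
Proof. by move=> Pp Sa; have := Delta_max_ubound Pp Sa; rewrite subrr. Qed.

End Delta_max.

Theorem lemma11 (R : realType)
  (dX : measure_display) (X : measurableType dX)
  (dA : measure_display) (A : measurableType dA)
  (hdiag : measurable [set aa : A * A | aa.1 = aa.2])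
  (d0 : probability X R)
  (S : X -> set A)
  (PT : topologicalType) (P : set PT) (hPc : compact P)
  (Rw : PT -> X -> A -> R)
  (hRmeas : forall p, P p -> measurable_fun [set: X * A] (fun xa => Rw p xa.1 xa.2))
  (asel : PT -> X -> A)
  (hsel : forall p, P p -> is_argmax_selector S (Rw p) (asel p))
  (hselm : forall p, P p -> measurable_fun [set: X] (asel p))
  (Dmin : R) (hDmin : (0 < Dmin)%R)
  (hgap : forall p, P p -> {ae d0, forall x, gap_at S (Rw p) (asel p) Dmin x}) :
  forall p q, P p -> P q ->
    Dmin%:E * d0 [set x | asel q x <> asel p x]
      <= regret d0 (Rw p) (asel p) (asel q) /\
    regret d0 (Rw p) (asel p) (asel q)
      <= Delta_max P S Rw asel * d0 [set x | asel q x <> asel p x].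
Proof.
move=> p q Pp Pq.
have Sq x : S x (asel q x) by have [] := hsel q Pq x.
have mE := measurable_neq hdiag (hselm q Pq) (hselm p Pp).
have mRp a : measurable_fun setT a -> measurable_fun setT (fun x => Rw p x (a x)).
  exact: measurableT_comp_graph (hRmeas p Pp).
have mf : measurable_fun setT
    (fun x => (Rw p x (asel p x) - Rw p x (asel q x))%:E).
  by apply/measurable_EFinP/measurable_funB; apply/mRp/hselm.
have f_ge0 x : 0 <= (Rw p x (asel p x) - Rw p x (asel q x))%:E.
  by rewrite lee_fin subr_ge0; apply: (hsel p Pp x).2.
split.
  apply: (mul_measure_le_integral d0 mE mf f_ge0 Dmin (ltW hDmin)).
  apply: filterS (hgap p Pp) => x gap neq.
  by rewrite lee_fin; exact: gap_at_le_subr gap (Sq x) neq.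
apply: (integral_le_mul_measure d0 mE mf f_ge0).
- exact: Delta_max_ge0 Pp (hsel p Pp point).1.
- by move=> x _; exact: Delta_max_ubound.
- by move=> x /contrapT ->; rewrite subrr.
Qed.
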